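(* Let $K$ be a flag simplicial complex, let $\succ$ be a hereditary ordering of $K$, and let $r$ be a positive integer. Suppose that for any two simplices $\sigma,\tau\in K$ with $\dim\sigma=\dim\tau=r$ and $\mu(\sigma)=\mu(\tau)$ we have $\sigma\cup\tau\in K$. Then $K$ collapses on a subcomplex of dimension less than $r$.
   Context: $K$ is a finite simplicial complex (family of subsets of a finite vertex set containing $\emptyset$, closed under subsets); $\dim\sigma=|\sigma|-1$. $K$ is flag if any set of vertices pairwise joined by edges of $K$ is a simplex of $K$. For a strict total ordering $\succ$ of $K$ and non-empty $\sigma$, $\mu(\sigma)$ is the $\succ$-largest facet (codimension-one face) of $\sigma$; $\succ$ is hereditary if $\sigma\succ\tau$ whenever $\dim\sigma>\dim\tau$, and $\sigma\succ\tau$ whenever $\mu(\sigma)\succ\mu(\tau)$. A pair of non-empty simplices $(\sigma,\tau)$ is a free pair if $\tau$ is a facet of $\sigma$ and $K\setminus\{\sigma,\tau\}$ is a simplicial complex; removing it is an elementary collapse; $K$ collapses on $L$ if $L$ is obtained by a finite sequence of elementary collapses. *)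

From mathcomp Require Import all_boot.
Set Implicit Arguments. Unset Strict Implicit. Unset Printing Implicit Defensive.

(* Simplices are finite sets of vertices of a finite vertex type V;
   a complex is a family K : {set {set V}}.  dim s = #|s| - 1. *)

Section Complexes.
Variable V : finType.
Implicit Types (K L : {set {set V}}) (s t : {set V}).

Definition is_complex K : Prop :=
  set0 \in K /\ forall s t, s \in K -> t \subset s -> t \in K.

(* any set of vertices pairwise joined by edges is a simplex
   (taking x = y also forces every vertex to be a vertex of K) *)
Definition flag K : Prop :=
  forall s, (forall x y, x \in s -> y \in s -> [set x; y] \in K) -> s \in K.

Definition facet t s : bool := (t \subset s) && (#|t|.+1 == #|s|).

Definition strict_total_order K (succ : rel {set V}) : Prop :=
  [/\ ({in K, forall s, ~~ succ s s}),
      (forall s t u, s \in K -> t \in K -> u \in K ->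
         succ s t -> succ t u -> succ s u) &
      ({in K &, forall s t, s != t -> succ s t || succ t s})].

Definition mu (succ : rel {set V}) s : {set V} :=
  odflt set0 [pick t | facet t s &&
     [forall t', facet t' s ==> (t' == t) || succ t t']].

Definition hereditary K (succ : rel {set V}) : Prop :=
  {in K &, forall s t, #|t| < #|s| -> succ s t} /\
  {in K &, forall s t, s != set0 -> t != set0 ->
      succ (mu succ s) (mu succ t) -> succ s t}.

Definition free_pair K s t : Prop :=
  [/\ s \in K, t \in K, t != set0, facet t s &
      is_complex (K :\ s :\ t)].

Inductive collapses K : {set {set V}} -> Prop :=
  | collapses_refl : collapses K K
  | collapses_step L s t :
      collapses K L -> free_pair L s t -> collapses K (L :\ s :\ t).

End Complexes.

From mathcomp Require Import all_boot.
Set Implicit Arguments. Unset Strict Implicit. Unset Printing Implicit Defensive.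

(* Call u an apex of a simplex Y when Y is the largest facet of u |: Y, and let
   the block of Y be the Boolean interval [Y, Y :|: apexes Y].  The second clause
   of hereditarity shows that Y is the largest simplex of its size inside
   Y :|: apexes Y; hence every simplex Z with at least r vertices lies in the
   block of exactly one r-vertex simplex, the one reached from Z by repeatedly
   taking largest facets.  For #|Y| = r, flagness and the hypothesis on mu make
   Y :|: apexes Y a simplex, so the block lies in K, and an up-closed Boolean
   interval of positive dimension collapses away.  Removing the blocks in
   decreasing order of their bases keeps each of them up-closed, and what remains
   has only simplices with at most r vertices. *)

Lemma exists_greatest (T : finType) (A : {set T}) (R : rel T) :
  (forall x y z, x \in A -> y \in A -> z \in A -> R x y -> R y z -> R x z) ->
  {in A &, forall x y, x != y -> R x y || R y x} ->
  A != set0 -> exists2 m, m \in A & forall a, a \in A -> a != m -> R m a.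
Proof.
move=> Rtr Rtot; have [n] := ubnP #|A|.
elim: n A Rtr Rtot => // n IH A Rtr Rtot szA /set0Pn[x xA].
have sub_A : {subset A :\ x <= A} by move=> y /setD1P[].
have inAx a : a \in A -> a != x -> a \in A :\ x by move=> aA ax; rewrite !inE ax.
have [A_x|/(IH _ _ _ _) [] //] := eqVneq (A :\ x) set0.
- by exists x => // a aA /(inAx a aA); rewrite A_x inE.
- by move=> y z t /sub_A ? /sub_A ? /sub_A ?; apply: Rtr.
- by move=> y z /sub_A ? /sub_A ?; apply: Rtot.
- by move: szA; rewrite (cardsD1 x A) xA.
move=> m /setD1P[mx mA] Rm.
have [Rxm|Rmx] := boolP (R x m).
  exists x => // a aA ax; have [-> //|am] := eqVneq a m.
  by apply: Rtr Rxm (Rm a (inAx a aA ax) am).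
have {}Rmx : R m x by move: (Rtot _ _ mA xA mx); rewrite (negbTE Rmx) orbF.
exists m => // a aA am; have [-> //|ax] := eqVneq a x.
exact: Rm (inAx a aA ax) am.
Qed.

Section Complexes.
Variable V : finType.
Implicit Types (K L M I : {set {set V}}) (B F W X Z : {set V}) (u : V).

Lemma collapses_trans K L M : collapses K L -> collapses L M -> collapses K M.
Proof. by move=> KL; elim=> // {}M s t _ KM; apply: collapses_step. Qed.

Definition up_closed L I := forall Z X, Z \in L -> X \in I -> X \subset Z -> Z \in I.

Lemma is_complex_setD L I :
  is_complex L -> set0 \notin I -> up_closed L I -> is_complex (L :\: I).
Proof.
case=> L0 Lsub I0 Iup; split; first by rewrite inE I0 L0.
move=> s t /setDP[sL sI] ts; rewrite inE (Lsub s t sL ts) andbT.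
by apply: contra sI => tI; apply: Iup ts.
Qed.

Lemma facet_setU1 u B : u \notin B -> facet B (u |: B).
Proof. by move=> uB; rewrite /facet subsetUr cardsU1 uB /= add1n. Qed.

Lemma setU1_neq0 u X : u |: X != set0.
Proof. by apply/set0Pn; exists u; apply: setU11. Qed.

Lemma facet_setU1_setU1 u F X : u \notin X -> facet F X -> facet (u |: F) (u |: X).
Proof.
move=> uX /andP[FX /eqP cX]; have uF : u \notin F by apply: contra uX; apply: subsetP.
by rewrite /facet setUS // !cardsU1 uX uF -cX /= !add1n.
Qed.

Lemma facet_setD1 u X : u \in X -> facet (X :\ u) X.
Proof. by move=> uX; rewrite /facet subD1set (cardsD1 u X) uX /= add1n. Qed.

Lemma facet_setU1_inv F X : facet F X -> exists2 u, u \notin F & X = u |: F.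
Proof.
case/andP=> FX /eqP cX; have : X :\: F != set0.
  by rewrite -card_gt0 cardsD (setIidPr FX) -cX subSnn.
case/set0Pn=> u /setDP[uX uF]; exists u => //; apply/eqP.
by rewrite eq_sym eqEcard subUset sub1set uX FX cardsU1 uF /= add1n -cX.
Qed.

Definition interval B W := [set X : {set V} | (B \subset X) && (X \subset B :|: W)].

Lemma interval0 B : interval B set0 = [set B].
Proof. by apply/setP => X; rewrite !inE setU0 eq_sym eqEsubset andbC. Qed.

Lemma mem_interval_setU1 u B W X : u \in W ->
  (X \in interval (u |: B) (W :\ u)) = (X \in interval B W) && (u \in X).
Proof.
move=> uW; rewrite !inE -setUA setUCA setD1K //.
by rewrite subUset sub1set; case: (u \in X); rewrite ?andbT ?andbF.
Qed.

Lemma mem_interval_setD1 u B W X : u \notin B ->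
  (X \in interval B (W :\ u)) = (X \in interval B W) && (u \notin X).
Proof.
move=> uB; rewrite !inE -andbA -subsetD1 setDUl.
by have /setDidPl-> : [disjoint B & [set u]] by rewrite disjoint_sym disjoints1.
Qed.

Lemma interval_split u B W : u \in W -> u \notin B ->
  interval B W = interval (u |: B) (W :\ u) :|: interval B (W :\ u).
Proof.
move=> uW uB; apply/setP => X.
by rewrite in_setU mem_interval_setU1 // mem_interval_setD1 // -andb_orr orbN andbT.
Qed.

Lemma set0_notin_interval B W : B != set0 -> set0 \notin interval B W.
Proof. by rewrite inE subset0 => /negbTE->. Qed.

Lemma up_closed_interval_setU1 L u B W : u \in W ->
  up_closed L (interval B W) -> up_closed L (interval (u |: B) (W :\ u)).
Proof.
move=> uW Iup Z X ZL; rewrite !mem_interval_setU1 // => /andP[XI uX] XZ.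
by rewrite (Iup Z X) ?(subsetP XZ).
Qed.

Lemma up_closed_interval_setD1 L u B W : u \in W -> u \notin B ->
  up_closed L (interval B W) ->
  up_closed (L :\: interval (u |: B) (W :\ u)) (interval B (W :\ u)).
Proof.
move=> uW uB Iup Z X /setDP[ZL ZIu]; rewrite !mem_interval_setD1 // => /andP[XI _] XZ.
rewrite (Iup Z X) //=; apply: contra ZIu => uZ.
by rewrite mem_interval_setU1 // (Iup Z X).
Qed.

(* Split off a vertex u of W: the half of the interval containing u is up-closed
   and collapses first, then the other half is up-closed in what remains. *)
Lemma collapses_interval L B W :
  is_complex L -> B != set0 -> [disjoint B & W] -> W != set0 ->
  interval B W \subset L -> up_closed L (interval B W) ->
  collapses L (L :\: interval B W).
Proof.
move: {2}#|W| (erefl #|W|) => n.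
elim: n => [|n IH] in L B W *; first by move/eqP; rewrite cards_eq0 => ->.
move=> cW Lc B0 BW W0 IL Iup.
have [u uW] := set0Pn _ W0.
have uB : u \notin B by rewrite (disjointFl BW uW).
have cW' : #|W :\ u| = n by apply: succn_inj; rewrite -cW (cardsD1 u W) uW.
have BW' : [disjoint B & W :\ u] by apply: disjointWr BW; apply: subD1set.
have [W'0 | W'0] := eqVneq (W :\ u) set0.
  have eI : interval B W = [set u |: B; B].
    by rewrite (interval_split uW uB) W'0 !interval0.
  rewrite eI -setDDl; apply: collapses_step; first exact: collapses_refl.
  split; rewrite ?facet_setU1 //; try by apply: (subsetP IL); rewrite eI !inE eqxx ?orbT.
  by rewrite setDDl -eI; apply: is_complex_setD; rewrite ?set0_notin_interval.
have eI : interval B W = interval (u |: B) (W :\ u) :|: interval B (W :\ u).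
  exact: interval_split.
have Iu0 := set0_notin_interval (W :\ u) (setU1_neq0 u B).
have Iu_up := up_closed_interval_setU1 uW Iup.
have BuW' : [disjoint u |: B & W :\ u].
  apply/pred0P => x /=; rewrite !inE.
  by have [->|_] := eqVneq x u; rewrite ?andbF //=; apply: (pred0P BW).
have Lu : collapses L (L :\: interval (u |: B) (W :\ u)).
  by apply: IH; rewrite ?setU1_neq0 //; apply: subset_trans IL; rewrite eI subsetUl.
have Lu_c := is_complex_setD Lc Iu0 Iu_up.
rewrite eI -setDDl; apply: collapses_trans Lu (IH _ _ _ cW' Lu_c B0 BW' W'0 _ _).
  apply/subsetP => X XI; rewrite in_setD (subsetP IL) ?andbT; last first.
    by rewrite eI in_setU XI orbT.
  move: XI; rewrite mem_interval_setD1 // mem_interval_setU1 //.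
  by case/andP=> _ /negbTE->; rewrite andbF.
exact: up_closed_interval_setD1.
Qed.
End Complexes.

Section Ordering.
Variables (V : finType) (K : {set {set V}}) (succ : rel {set V}).
Hypotheses (K_complex : is_complex K) (succ_order : strict_total_order K succ).
Hypothesis succ_hereditary : hereditary K succ.
Implicit Types (s t w A B F G M X Y Z rho : {set V}) (u : V).

Lemma complex_sub s t : s \in K -> t \subset s -> t \in K.
Proof. by case: K_complex => _; apply. Qed.

Lemma succ_irr s : s \in K -> ~~ succ s s.
Proof. by case: succ_order => + _ _; apply. Qed.

Lemma succ_trans s t w :
  s \in K -> t \in K -> w \in K -> succ s t -> succ t w -> succ s w.
Proof. by case: succ_order => _ + _; apply. Qed.

Lemma succ_total s t : s \in K -> t \in K -> s != t -> succ s t || succ t s.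
Proof. by case: succ_order => _ _; apply. Qed.

Lemma succ_asym s t : s \in K -> t \in K -> succ s t -> ~~ succ t s.
Proof.
move=> sK tK st; apply: contra (succ_irr sK) => ts.
exact: succ_trans st ts.
Qed.

Lemma succ_mu s t : s \in K -> t \in K -> s != set0 -> t != set0 ->
  succ (mu succ s) (mu succ t) -> succ s t.
Proof. by case: succ_hereditary => _; apply. Qed.

Lemma muP s : s \in K -> s != set0 ->
  facet (mu succ s) s /\ forall t, facet t s -> t != mu succ s -> succ (mu succ s) t.
Proof.
move=> sK s0; set A := [set t | facet t s].
have AK t : t \in A -> t \in K by rewrite inE => /andP[ts _]; apply: complex_sub ts.
have [x xs] := set0Pn _ s0.
have A0 : A != set0.
  by apply/set0Pn; exists (s :\ x); rewrite inE facet_setD1.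
have [m mA Am] := @exists_greatest _ A succ
  (fun t y z tA yA zA => succ_trans (AK t tA) (AK y yA) (AK z zA))
  (fun t y tA yA => succ_total (AK t tA) (AK y yA)) A0.
rewrite /mu; case: pickP => [t /andP[ft /forallP tmax] | /(_ m)].
  by split=> // t' ft' t't; have := tmax t'; rewrite ft' (negbTE t't).
move: mA; rewrite inE => -> /=; case/forallP => t'; apply/implyP => ft'.
by have [//|t'm] := eqVneq t' m; rewrite Am ?inE.
Qed.

Lemma mu_facet s : s \in K -> s != set0 -> facet (mu succ s) s.
Proof. by move=> sK s0; case: (muP sK s0). Qed.

Lemma mu_sub s : s \in K -> s != set0 -> mu succ s \subset s.
Proof. by move=> sK s0; case/andP: (mu_facet sK s0). Qed.

Lemma card_mu s : s \in K -> s != set0 -> #|mu succ s|.+1 = #|s|.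
Proof. by move=> sK s0; case/andP: (mu_facet sK s0) => _ /eqP. Qed.

Lemma mu_in s : s \in K -> s != set0 -> mu succ s \in K.
Proof. by move=> sK s0; apply: complex_sub sK (mu_sub sK s0). Qed.

Lemma succ_mu_facet s t : s \in K -> s != set0 ->
  facet t s -> t != mu succ s -> succ (mu succ s) t.
Proof. by move=> sK s0; case: (muP sK s0) => _; apply. Qed.

Lemma mu_mono s t : s \in K -> t \in K -> s != set0 -> t != set0 ->
  succ s t -> mu succ s = mu succ t \/ succ (mu succ s) (mu succ t).
Proof.
move=> sK tK s0 t0 st; have [->|mst] := eqVneq (mu succ s) (mu succ t); first by left.
case/orP: (succ_total (mu_in sK s0) (mu_in tK t0) mst) => [|ts]; first by right.
by move: (succ_asym sK tK st); rewrite (succ_mu tK sK t0 s0 ts).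
Qed.

Lemma mu_dominating (P : pred {set V}) s F : s \in K -> facet F s -> P F ->
  (forall F', facet F' s -> ~~ P F' -> succ F F') -> P (mu succ s).
Proof.
move=> sK Fs PF FP; have s0 : s != set0.
  by rewrite -card_gt0; case/andP: Fs => _ /eqP <-.
apply/negPn/negP => Pmu; have FK : F \in K by case/andP: Fs => /(complex_sub sK).
have Fmu : F != mu succ s by apply: contraNneq Pmu => <-.
have := succ_asym (mu_in sK s0) FK (succ_mu_facet sK s0 Fs Fmu).
by rewrite FP ?mu_facet.
Qed.

Definition apex u Y := [&& u \notin Y, u |: Y \in K & mu succ (u |: Y) == Y].

Definition apexes Y := [set u | apex u Y].

Lemma apexP u Y :
  reflect [/\ u \notin Y, u |: Y \in K & mu succ (u |: Y) = Y] (apex u Y).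
Proof. by apply: (iffP and3P) => -[? ? /eqP ?]. Qed.

Lemma apex_mu u Y : Y != set0 -> apex u Y -> apex u (mu succ Y).
Proof.
move=> Y0 /apexP[uY uYK muY].
have YK : Y \in K by apply: complex_sub uYK (subsetUr _ _).
have muYY := mu_sub YK Y0; set X := u |: mu succ Y.
have uX : u \notin mu succ Y by apply: contra uY; apply: (subsetP muYY).
have XK : X \in K by apply: complex_sub uYK (setUS _ muYY).
have X0 : X != set0 := setU1_neq0 u _.
apply/apexP; split=> //; apply/eqP/negPn/negP => muX.
have XY : succ Y X.
  rewrite -{1}muY; apply: succ_mu_facet; rewrite ?setU1_neq0 ?facet_setU1_setU1 //.
    exact: mu_facet.
  by apply: contraNneq uY; rewrite muY => <-; apply: setU11.
have XmuY : succ (mu succ X) (mu succ Y).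
  by apply: succ_mu_facet; rewrite ?facet_setU1 // eq_sym.
have [eqmu|] := mu_mono YK XK Y0 X0 XY; first by move: muX; rewrite -/X -eqmu eqxx.
by apply/negP; apply: succ_asym XmuY; apply: mu_in.
Qed.

Lemma setU_apexes_mu A : A \in K -> A != set0 ->
  A :|: apexes A \subset mu succ A :|: apexes (mu succ A).
Proof.
move=> AK A0; have [z zmu eA] := facet_setU1_inv (mu_facet AK A0).
rewrite subUset; apply/andP; split; apply/subsetP => x; last first.
  by rewrite !inE => /(apex_mu A0) ->; rewrite orbT.
rewrite {1}eA in_setU1 => /predU1P[->|xmu]; last by rewrite in_setU xmu.
by rewrite in_setU inE; apply/orP; right; apply/apexP; rewrite -eA.
Qed.

Lemma block_base_greatest A G : A \in K -> G \in K -> #|G| = #|A| ->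
  G \subset A :|: apexes A -> G != A -> succ A G.
Proof.
move: {2}#|A| (erefl #|A|) => n; elim: n => [|n IH] in A G *.
  by move=> /cards0_eq-> _ _; rewrite cards0 => /cards0_eq-> _; rewrite eqxx.
move=> cA AK GK cG GA GnA.
have A0 : A != set0 by rewrite -card_gt0 cA.
have G0 : G != set0 by rewrite -card_gt0 cG cA.
have [eqmu|nmu] := eqVneq (mu succ G) (mu succ A); last first.
  apply: succ_mu => //; apply: IH; rewrite ?mu_in //.
  - by apply: succn_inj; rewrite card_mu.
  - by apply: succn_inj; rewrite !card_mu // cG.
  by apply: subset_trans (setU_apexes_mu AK A0); apply: subset_trans GA; apply: mu_sub.
have [g gG gA] : exists2 g, g \in G & g \notin A.
  by apply/subsetPn; apply: contra GnA => GsA; rewrite eqEcard GsA cG /=.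
have /apexP[_ gAK mugA] : apex g A.
  by have := subsetP GA g gG; rewrite !inE (negbTE gA).
have eG : G = g |: mu succ A.
  have [g' _ eG] := facet_setU1_inv (mu_facet GK G0).
  move: gG; rewrite eG eqmu in_setU1 => /predU1P[-> //|/(subsetP (mu_sub AK A0))].
  by rewrite (negbTE gA).
rewrite -mugA; apply: succ_mu_facet; rewrite ?setU1_neq0 ?mugA //.
by rewrite eG facet_setU1_setU1 ?mu_facet.
Qed.

Definition block rho := interval rho (apexes rho).

Lemma blockP rho X :
  reflect (rho \subset X /\ X \subset rho :|: apexes rho) (X \in block rho).
Proof. by rewrite inE; apply: andP. Qed.

Lemma exists_setD1_block rho B : B \in block rho -> B != rho ->
  exists2 s, s \in B & B :\ s \in block rho.
Proof.
case/blockP=> rB Bspan BnR; have [s sB sr] : exists2 s, s \in B & s \notin rho.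
  by apply/subsetPn; apply: contra BnR => Br; rewrite eqEsubset Br.
exists s => //; apply/blockP; split; last exact: subset_trans (subD1set _ _) Bspan.
by rewrite subsetD1 rB.
Qed.

Lemma succ_block_member rho A B : A \in K -> B \in K -> #|A| = #|B| ->
  A \subset rho :|: apexes rho -> B \in block rho -> ~~ (rho \subset A) -> succ B A.
Proof.
move: {2}#|B| (erefl #|B|) => n; elim: n => [|n IH] in A B *.
  move=> /cards0_eq-> _ _ _ _ /blockP[]; rewrite subset0 => /eqP-> _.
  by rewrite sub0set.
move=> cB AK BK cA Aspan Bbl rA.
have [eB|nB] := eqVneq B rho.
  rewrite eB in BK cA *; apply: block_base_greatest => //.
  by apply: contraNneq rA => ->.
have [s sB B'bl] := exists_setD1_block Bbl nB.
have B0 : B != set0 by apply/set0Pn; exists s.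
have A0 : A != set0 by rewrite -card_gt0 cA cB.
have Bspan : B \subset rho :|: apexes rho by case/blockP: Bbl.
have cBs : #|B :\ s| = n by apply: succn_inj; rewrite -cB (cardsD1 s B) sB.
have rmu : rho \subset mu succ B.
  apply: (@mu_dominating (fun F => rho \subset F) _ _ BK (facet_setD1 sB)).
    by case/blockP: B'bl.
  move=> F /andP[FB /eqP cF] rF; apply: IH; rewrite ?cBs //.
  - exact: complex_sub FB.
  - exact: complex_sub BK (subD1set B s).
  - by apply: succn_inj; rewrite cF cB.
  - exact: subset_trans FB Bspan.
apply: succ_mu => //; apply: IH; rewrite ?mu_in //.
- by apply: succn_inj; rewrite card_mu.
- by apply: succn_inj; rewrite !card_mu // cA.
- exact: subset_trans (mu_sub AK A0) Aspan.
- by apply/blockP; split; last exact: subset_trans (mu_sub BK B0) Bspan.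
- by apply: contra rA => /subset_trans; apply; apply: mu_sub.
Qed.

Lemma sub_mu_block rho B : B \in K -> B \in block rho -> B != rho ->
  rho \subset mu succ B.
Proof.
move=> BK Bbl nB; have [s sB B'bl] := exists_setD1_block Bbl nB.
apply: (@mu_dominating (fun F => rho \subset F) _ _ BK (facet_setD1 sB)).
  by case/blockP: B'bl.
move=> F /andP[FB /eqP cF] rF; apply: (@succ_block_member rho) => //.
- exact: complex_sub FB.
- exact: complex_sub BK (subD1set B s).
- by apply: succn_inj; rewrite cF (cardsD1 s B) sB.
- by apply: subset_trans FB _; case/blockP: Bbl.
Qed.

Lemma apex_block u rho M : M \in K -> M \in block rho -> apex u M -> apex u rho.
Proof.
move: {2}#|M| (erefl #|M|) => n; elim: n => [|n IH] in M *.
  by move=> /cards0_eq-> _ /blockP[]; rewrite subset0 => /eqP->.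
move=> cM MK Mbl uM; have [<- //|nM] := eqVneq M rho.
have M0 : M != set0 by rewrite -card_gt0 cM.
apply: (IH (mu succ M)); rewrite ?mu_in ?apex_mu //.
  by apply: succn_inj; rewrite card_mu.
apply/blockP; split; first exact: sub_mu_block.
by apply: subset_trans (mu_sub MK M0) _; case/blockP: Mbl.
Qed.

Lemma exists_block k Z : Z \in K -> k <= #|Z| ->
  exists2 rho : {set V}, #|rho| = k & Z \in block rho.
Proof.
move=> + /subnKC; move: (#|Z| - k) => j; elim: j => [|j IH] in Z *.
  by move=> _ cZ; exists Z; rewrite -?cZ ?addn0 // inE subxx subsetUl.
move=> ZK cZ; have Z0 : Z != set0 by rewrite -card_gt0 -cZ addnS.
have [|rho cr mubl] := IH (mu succ Z) (mu_in ZK Z0).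
  by apply: succn_inj; rewrite card_mu // -cZ addnS.
have [u umu eZ] := facet_setU1_inv (mu_facet ZK Z0).
have /apex_block uapex : apex u (mu succ Z) by apply/apexP; rewrite -eZ.
have muZ := mu_sub ZK Z0.
exists rho => //; case/blockP: mubl => rmu muspan; apply/blockP; split.
  exact: subset_trans rmu muZ.
rewrite eZ subUset muspan andbT sub1set !inE uapex ?mu_in ?orbT //.
exact/blockP.
Qed.

Lemma succ_block_base rho rho' Z : Z \in K -> #|rho| = #|rho'| ->
  Z \in block rho' -> rho \subset Z -> rho != rho' -> succ rho' rho.
Proof.
move=> ZK cr /blockP[r'Z Zspan] rZ nr; apply: block_base_greatest => //.
- exact: complex_sub r'Z.
- exact: complex_sub rZ.
- exact: subset_trans rZ Zspan.
Qed.

Lemma block_base_uniq rho rho' Z : Z \in K -> #|rho| = #|rho'| ->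
  Z \in block rho -> Z \in block rho' -> rho = rho'.
Proof.
move=> ZK cr Zbl Zbl'; apply/eqP/negPn/negP => nr.
have /blockP[rZ _] := Zbl; have /blockP[r'Z _] := Zbl'.
move: (succ_block_base ZK cr Zbl' rZ nr).
apply/negP/succ_asym; rewrite ?(complex_sub ZK) //.
by apply: (succ_block_base ZK); rewrite 1?eq_sym.
Qed.

Variable r : nat.
Hypothesis K_flag : flag K.
Hypothesis r_gt0 : 0 < r.
Hypothesis setU_mu_eq : forall s t, s \in K -> t \in K -> #|s| = r.+1 -> #|t| = r.+1 ->
  mu succ s = mu succ t -> s :|: t \in K.
Implicit Types (D : {set {set V}}).

Lemma block_sub_complex rho : rho \in K -> #|rho| = r -> block rho \subset K.
Proof.
move=> rK cr; have cone x : x \in rho :|: apexes rho -> x |: rho \in K.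
  rewrite in_setU inE => /orP[xr | /apexP[] //].
  by rewrite (setUidPr _) ?sub1set.
have pair_sub x y : x \in rho -> [set x; y] \subset y |: rho.
  by move=> xr; rewrite subUset !sub1set setU11 !inE xr !orbT.
have spanK : rho :|: apexes rho \in K.
  apply: K_flag => x y xs ys; have [xr|xr] := boolP (x \in rho).
    exact: complex_sub (cone y ys) (pair_sub x y xr).
  have [yr|yr] := boolP (y \in rho).
    by rewrite setUC; apply: complex_sub (cone x xs) (pair_sub y x yr).
  move: xs ys; rewrite !in_setU (negbTE xr) (negbTE yr) /= !inE.
  move=> /apexP[xr' xK mux] /apexP[yr' yK muy].
  have := setU_mu_eq xK yK; rewrite !cardsU1 xr' yr' cr mux muy => /(_ erefl erefl erefl).
  by move/complex_sub; apply; rewrite subUset !sub1set !in_setU !set11 orbT.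
by apply/subsetP => X /blockP[_ Xspan]; apply: complex_sub spanK Xspan.
Qed.

Definition bases := [set rho in K | (#|rho| == r) && (apexes rho != set0)].

Definition blocks D := \bigcup_(rho in D) block rho.

Definition succ_closed D :=
  forall rho rho', rho \in D -> rho' \in bases -> succ rho' rho -> rho' \in D.

Lemma basesP rho :
  reflect [/\ rho \in K, #|rho| = r & apexes rho != set0] (rho \in bases).
Proof. by rewrite inE; apply: (iffP and3P) => -[? /eqP ? ?]. Qed.

Lemma base_in_bases rho Z : Z \in K -> #|rho| = r -> Z \in block rho -> Z != rho ->
  rho \in bases.
Proof.
move=> ZK cr Zbl nZ; have /blockP[rZ _] := Zbl.
apply/basesP; split; rewrite ?(complex_sub ZK) //.
by apply: contra nZ => /eqP W0; move: Zbl; rewrite /block W0 interval0 inE.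
Qed.

Lemma block_superset rho Z : rho \in K -> #|rho| = r -> Z \in K -> rho \subset Z ->
  exists2 rho', Z \in block rho' & rho' = rho \/ rho' \in bases /\ succ rho' rho.
Proof.
move=> rK cr ZK rZ; have rZc : r <= #|Z| by rewrite -cr subset_leq_card.
have [rho' cr' Zbl] := exists_block ZK rZc.
exists rho' => //; have [-> | nr] := eqVneq rho' rho; [by left | right].
split; last by apply: succ_block_base Zbl rZ _; rewrite ?cr ?cr' // eq_sym.
apply: base_in_bases Zbl _ => //; apply: contra nr => /eqP eZ.
by rewrite eq_sym eqEcard -{1}eZ rZ cr cr' /=.
Qed.

Lemma mem_blocks D X : reflect (exists2 rho, rho \in D & X \in block rho) (X \in blocks D).
Proof. exact: bigcupP. Qed.

Lemma up_closed_blocks D : D \subset bases -> succ_closed D -> up_closed K (blocks D).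
Proof.
move=> Dbases Dclosed Z X ZK /mem_blocks[rho rD Xbl] XZ.
have /basesP[rK cr _] := subsetP Dbases rho rD.
have rZ : rho \subset Z by case/blockP: Xbl => rX _; apply: subset_trans XZ.
have [rho' Zbl r'D] := block_superset rK cr ZK rZ; apply/mem_blocks; exists rho' => //.
by case: r'D => [-> | [r'bases r'r]] //; apply: Dclosed r'r.
Qed.

Lemma set0_notin_blocks D : D \subset bases -> set0 \notin blocks D.
Proof.
move=> Dbases; apply/mem_blocks => -[rho /(subsetP Dbases)/basesP[_ cr _]].
by apply/negP; apply: set0_notin_interval; rewrite -card_gt0 cr.
Qed.

Lemma bases_sub : {subset bases <= K}.
Proof. by move=> rho /basesP[]. Qed.

Lemma succ_closed_setD1 D rho0 : D \subset bases -> succ_closed D ->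
  {in D, forall rho, rho != rho0 -> succ rho rho0} -> succ_closed (D :\ rho0).
Proof.
move=> Dbases Dclosed r0least rho rho' /setD1P[rr0 rD] r'bases r'r.
rewrite !inE (Dclosed rho) // andbT; apply: contraTneq r'r => r'r0.
rewrite r'r0 in r'bases *; apply: succ_asym (r0least rho rD rr0); apply: bases_sub => //.
exact: (subsetP Dbases).
Qed.

Lemma collapses_least_block D rho0 : D \subset bases -> succ_closed D -> rho0 \in D ->
  {in D, forall rho, rho != rho0 -> succ rho rho0} ->
  collapses (K :\: blocks (D :\ rho0)) (K :\: blocks D).
Proof.
move=> Dbases Dclosed r0D r0least.
have /basesP[r0K cr0 W0] := subsetP Dbases rho0 r0D.
have r0bl_sub := block_sub_complex r0K cr0.
have D'bases : D :\ rho0 \subset bases by apply: subset_trans Dbases; apply: subD1set.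
have blocksD : blocks D = block rho0 :|: blocks (D :\ rho0).
  by rewrite /blocks (big_setD1 _ r0D).
rewrite blocksD setUC -setDDl; apply: collapses_interval.
- apply: is_complex_setD; [by [] | exact: set0_notin_blocks | ].
  by apply: up_closed_blocks => //; apply: succ_closed_setD1.
- by rewrite -card_gt0 cr0.
- by apply/pred0P => u /=; rewrite inE; apply/negP => /andP[ur /apexP[]]; rewrite ur.
- by [].
- apply/subsetP => X Xbl; rewrite inE (subsetP r0bl_sub) // andbT.
  apply/mem_blocks => -[rho /setD1P[rr0 /(subsetP Dbases)/basesP[rK cr _]] Xbl'].
  by move: rr0; rewrite (block_base_uniq _ _ Xbl' Xbl) ?eqxx ?cr ?(subsetP r0bl_sub).
- move=> Z X /setDP[ZK ZD'] Xbl XZ.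
  have := up_closed_blocks Dbases Dclosed ZK _ XZ.
  by rewrite blocksD !in_setU Xbl (negbTE ZD') orbF; apply.
Qed.

Lemma collapses_blocks D : D \subset bases -> succ_closed D -> collapses K (K :\: blocks D).
Proof.
move: {2}#|D| (erefl #|D|) => n; elim: n => [|n IH] in D *.
  by move=> /cards0_eq-> _ _; rewrite /blocks big_set0 setD0; apply: collapses_refl.
move=> cD Dbases Dclosed; have DK rho : rho \in D -> rho \in K.
  by move/(subsetP Dbases)/bases_sub.
have [rho0 r0D r0least] :
    exists2 rho0, rho0 \in D & forall rho, rho \in D -> rho != rho0 -> succ rho rho0.
  apply: (exists_greatest (R := fun a b => succ b a)); last by rewrite -card_gt0 cD.
    by move=> a b c aD bD cD' ba cb; apply: succ_trans cb ba; apply: DK.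
  by move=> a b aD bD ab; rewrite orbC succ_total ?DK.
apply: collapses_trans (collapses_least_block Dbases Dclosed r0D r0least).
apply: IH; last exact: succ_closed_setD1.
  by apply: succn_inj; rewrite -cD (cardsD1 rho0 D) r0D.
by apply: subset_trans Dbases; apply: subD1set.
Qed.

Lemma card_setD_blocks s : s \in K :\: blocks bases -> #|s| <= r.
Proof.
case/setDP=> sK; rewrite leqNgt; apply: contra => rs.
have [rho cr sbl] := exists_block sK (ltnW rs); apply/mem_blocks; exists rho => //.
by apply: base_in_bases sbl _; rewrite // -?cr; apply: contraTneq rs => ->; rewrite cr ltnn.
Qed.
End Ordering.


Theorem proposition1 (V : finType) (K : {set {set V}}) (succ : rel {set V})
  (r : nat) :
  is_complex K -> flag K ->
  strict_total_order K succ -> hereditary K succ ->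
  0 < r ->
  (forall s t, s \in K -> t \in K -> #|s| = r.+1 -> #|t| = r.+1 ->
     mu succ s = mu succ t -> s :|: t \in K) ->
  exists L, collapses K L /\ (forall s, s \in L -> #|s| <= r).
Proof.
move=> K_complex K_flag succ_order succ_hereditary r_gt0 setU_mu_eq.
exists (K :\: blocks K succ (bases K succ r)); split.
  apply: (collapses_blocks K_complex succ_order succ_hereditary K_flag r_gt0 setU_mu_eq).
    exact: subxx.
  by move=> rho rho' _.
exact: card_setD_blocks.
Qed.
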